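(* Let $g\in C^2(\overline U\to\mathbb R)$ and suppose that the discrete transversality inequality $\nabla g(\hat{\bm x}^* )\cdot\bm f^\tau_\pm(\cdot)\ge\hat\alpha_S^2>0$ holds at the arguments $(t,\bm x^\tau(t),\hat t^*,\hat{\bm x}^* )$ for $\bm f^\tau_-$ ($t\in[t_k,\hat t^*]$) and $(\hat t^*,\hat{\bm x}^*,t,\bm x^\tau(t))$ for $\bm f^\tau_+$ ($t\in[\hat t^*,t_{k+1}]$) (as guaranteed for sufficiently small $\tau$ by the discrete transversality lemma). Then for all $t\in[t_k,t_{k+1}]$, $$|t-\hat t^*|\le\frac{\hat M(t-\hat t^* )^2+L_g\|\bm x^\tau(t;\bm x_k,t_k)-\bm x^\tau(\hat t^*;\bm x_k,t_k)\|}{\hat\alpha_S^2},$$ where $L_g$ is the Lipschitz constant of $g$, $\hat M=\frac12\max(\hat M_-,\hat M_+)$, $$\hat M_-=\sup_{t\in[t_k,\hat t^*],\,s\in[0,1]}\big|\bm f^\tau_-(t,\bm x^\tau(t),\hat t^*,\hat{\bm x}^* )\cdot H_g(\bm x^\tau(t)+s(\hat{\bm x}^*-\bm x^\tau(t)))\,\bm f^\tau_-(t,\bm x^\tau(t),\hat t^*,\hat{\bm x}^* )\big|,$$ $$\hat M_+=\sup_{t\in[\hat t^*,t_{k+1}],\,s\in[0,1]}\big|\bm f^\tau_+(\hat t^*,\hat{\bm x}^*,t,\bm x^\tau(t))\cdot H_g(\hat{\bm x}^*+s(\bm x^\tau(t)-\hat{\bm x}^* ))\,\bm f^\tau_+(\hat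 t^*,\hat{\bm x}^*,t,\bm x^\tau(t))\big|,$$ and $H_g$ is the Hessian of $g$.
   Context: Setting: $U\subset\mathbb R^d$ bounded open, switching function $g$, $S=\{g=0\}$, $U_\pm=\{\pm g>0\}$. Discrete vector fields $\bm f^\tau_\pm$. Transition scheme from $\bm x_k\in U_-$ at time $t_k$ with $t_{k+1}=t_k+\tau$: $(\hat t^*,\hat{\bm x}^* )$ with $\hat t^*\in[t_k,t_{k+1}]$ solves $\bm x=\bm x_k+(t-t_k)\bm f^\tau_-(t_k,\bm x_k,t,\bm x)$, $g(\bm x)=0$. Discrete solution $\bm x^\tau(t)=\bm x^\tau(t;\bm x_k,t_k)$: for $t\in[t_k,\hat t^*]$ it satisfies $\hat{\bm x}^*-\bm x^\tau(t)=(\hat t^*-t)\bm f^\tau_-(t,\bm x^\tau(t),\hat t^*,\hat{\bm x}^* )$, and for $t\in[\hat t^*,t_{k+1}]$ it satisfies $\bm x^\tau(t)=\hat{\bm x}^*+(t-\hat t^* )\bm f^\tau_+(\hat t^*,\hat{\bm x}^*,t,\bm x^\tau(t))$; $\bm x^\tau(\hat t^* )=\hat{\bm x}^*$. *)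

From HB Require Import structures.
From mathcomp Require Import all_boot all_order all_algebra.
From mathcomp Require Import all_classical all_reals all_analysis.
Set Implicit Arguments. Unset Strict Implicit. Unset Printing Implicit Defensive.
Import Order.TTheory GRing.Theory Num.Theory.
Import numFieldNormedType.Exports.
Local Open Scope classical_set_scope.
Local Open Scope ring_scope.

Section Defs.
Variables (R : realType) (d : nat).
Notation V := 'rV[R]_d.

Definition p_partial (i : 'I_d) (h : V -> R) (x : V) : R :=
  'D_(delta_mx 0 i) h x.

Definition p_grad (g : V -> R) (x : V) : V := \row_i p_partial i g x.

Definition p_hessian (g : V -> R) (x : V) : 'M[R]_d :=
  \matrix_(i, j) p_partial j (p_partial i g) x.

Definition p_dot (u v : V) : R := \sum_i u 0 i * v 0 i.
Definition p_enorm (u : V) : R := Num.sqrt (p_dot u u).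

Definition p_qform (H : 'M[R]_d) (u : V) : R := p_dot u (u *m H^T).

Definition p_C2_on (A : set V) (g : V -> R) : Prop :=
  forall x, closure A x ->
    differentiable g x /\
    (forall i, differentiable (p_partial i g) x) /\
    (forall i j, {within closure A, continuous (p_partial j (p_partial i g))}).

Definition p_lipschitz_on (B : set V) (g : V -> R) (L : R) : Prop :=
  forall x y, B x -> B y -> `|g x - g y| <= L * p_enorm (x - y).
End Defs.

From HB Require Import structures.
From mathcomp Require Import all_boot all_order all_algebra.
From mathcomp Require Import all_classical all_reals all_analysis.
From mathcomp Require Import ring lra.
Set Implicit Arguments. Unset Strict Implicit. Unset Printing Implicit Defensive.
Import Order.TTheory GRing.Theory Num.Theory.
Import numFieldNormedType.Exports.
Local Open Scope classical_set_scope.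
Local Open Scope ring_scope.

(* Let ts be the transition time and xs = x^tau(ts).  On both
   sides of ts the discrete solution satisfies x^tau(t) - xs = (t - ts) f,
   with f = f^tau_- for t <= ts and f = f^tau_+ for t >= ts.  Since
   g(xs) = 0, a second-order Taylor expansion of g along the segment from
   xs to x^tau(t) gives
      g(x^tau(t)) = (t - ts) grad g(xs).f + r,   |r| <= M/2 (t - ts)^2,
   with M a bound on the Hessian quadratic form in direction f.  Discrete
   transversality bounds |t - ts| aS^2 by |(t - ts) grad g(xs).f|, and the
   Lipschitz property bounds |g(x^tau(t))| = |g(x^tau(t)) - g(xs)|. *)

Section TaylorInterval.
Variable R : realType.

Lemma is_derive_within_continuous (f df : R -> R) (a b : R) :
  (forall s : R, a <= s <= b -> is_derive s (1:R) f (df s)) ->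
  {within `[a, b], continuous f}.
Proof.
move=> f_der; apply: derivable_within_continuous => s.
by rewrite in_itv /= => /f_der [].
Qed.

(* One-sided second-order Taylor estimate on [0, 1]:
   if f'' <= M then f(1) - f(0) - f'(0) <= M/2.  With p = f'(0) X + M/2 X^2,
   the mean value theorem gives (f - p)(1) - (f - p)(0) = f'(c) - p'(c) for
   some c in [0, 1], and f'(c) - p'(c) = f'(c) - f'(0) - M c <= 0 by the
   mean value theorem applied to f' on [0, c]. *)
Lemma taylor2_upper (f f1 f2 : R -> R) (M : R) :
  (forall s : R, 0 <= s <= 1 -> is_derive s (1:R) f (f1 s)) ->
  (forall s : R, 0 <= s <= 1 -> is_derive s (1:R) f1 (f2 s)) ->
  (forall s : R, 0 <= s <= 1 -> f2 s <= M) ->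
  f 1 - f 0 - f1 0 <= M / 2.
Proof.
move=> f_der f1_der f2_le.
pose p : {poly R} := f1 0 *: 'X + (M / 2) *: 'X^2.
have p_eval (s : R) : p.[s] = f1 0 * s + M / 2 * s ^+ 2 by rewrite /p !hornerE.
have p'_eval (s : R) : p^`().[s] = f1 0 + M * s.
  by rewrite /p derivD !derivZ derivX derivXn !hornerE /=; field.
pose h s := f s - p.[s].
pose dh s := f1 s - p^`().[s].
have h_der (s : R) : 0 <= s <= 1 -> is_derive s (1:R) h (dh s).
  by move=> s01; exact: is_deriveB (f_der s s01) (is_derive_poly p s).
have [c c01 h_mvt] : exists2 c, c \in `[0, 1] & h 1 - h 0 = dh c * (1 - 0).
  apply: MVT_segment => //; last exact: is_derive_within_continuous h_der.
  by move=> s; rewrite in_itv /= => /andP[s0 s1]; apply: h_der; rewrite !ltW.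
move: c01; rewrite in_itv /= => /andP[c0 c1].
have [c' c'0c f1_mvt] :
    exists2 c', c' \in `[0, c] & f1 c - f1 0 = f2 c' * (c - 0).
  apply: MVT_segment => //.
    move=> s; rewrite in_itv /= => /andP[s0 sc]; apply: f1_der.
    by rewrite ltW //= ltW // (lt_le_trans sc).
  apply: is_derive_within_continuous => s /andP[s0 sc].
  by apply: f1_der; rewrite s0 (le_trans sc).
move: c'0c; rewrite in_itv /= => /andP[c'0 c'c].
have dh_le0 : dh c <= 0.
  rewrite /dh p'_eval subr0 in f1_mvt *.
  rewrite subr_le0 -lerBlDl f1_mvt ler_wpM2r //.
  by apply: f2_le; rewrite c'0 (le_trans c'c).
rewrite /h subr0 mulr1 !p_eval expr1n expr0n /= !mulr1 !mulr0 !addr0 in h_mvt.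
lra.
Qed.

Lemma taylor2_abs (f f1 f2 : R -> R) (M : R) :
  (forall s : R, 0 <= s <= 1 -> is_derive s (1:R) f (f1 s)) ->
  (forall s : R, 0 <= s <= 1 -> is_derive s (1:R) f1 (f2 s)) ->
  (forall s : R, 0 <= s <= 1 -> `|f2 s| <= M) ->
  `|f 1 - f 0 - f1 0| <= M / 2.
Proof.
move=> f_der f1_der f2_le; rewrite ler_norml; apply/andP; split.
  have := @taylor2_upper (fun s => - f s) (fun s => - f1 s) (fun s => - f2 s) M.
  have f_negder (s : R) : 0 <= s <= 1 -> is_derive s (1:R) (fun s => - f s) (- f1 s).
    by move=> s01; exact: is_deriveN (f_der s s01).
  have f1_negder (s : R) : 0 <= s <= 1 -> is_derive s (1:R) (fun s => - f1 s) (- f2 s).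
    by move=> s01; exact: is_deriveN (f1_der s s01).
  have f2_ge (s : R) : 0 <= s <= 1 -> - f2 s <= M.
    by move=> s01; rewrite (le_trans _ (f2_le s s01)) // -normrN ler_norm.
  by move=> /(_ f_negder f1_negder f2_ge); lra.
apply: taylor2_upper f_der f1_der _ => s s01.
exact: le_trans (ler_norm _) (f2_le s s01).
Qed.

End TaylorInterval.

Section TaylorSegment.
Variables (R : realType) (d : nat).
Notation V := 'rV[R]_d.

Lemma is_derive_along_line (h : V -> R) (a v : V) (s : R) :
  differentiable h (a + s *: v) ->
  is_derive s (1:R) (fun r : R => h (a + r *: v)) ('D_v h (a + s *: v)).
Proof.
move=> h_diff.
have quotient_eq :
    (fun t : R => t^-1 *: (((fun r : R => h (a + r *: v)) \o shift s) (t *: 1)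
                          - h (a + s *: v)))
  = (fun t : R => t^-1 *: ((h \o shift (a + s *: v)) (t *: v) - h (a + s *: v))).
  apply/funext => t /=; congr (_ *: (h _ - _)).
  by rewrite scalerDl [t *: 1]mulr1 addrCA addrA addrC.
apply: DeriveDef; last by rewrite /derive quotient_eq.
by rewrite /derivable quotient_eq; exact: diff_derivable.
Qed.

Lemma derive_partial_sum (h : V -> R) (x v : V) : differentiable h x ->
  'D_v h x = \sum_i v 0 i * p_partial i h x.
Proof.
move=> h_diff; rewrite deriveE // {1}(row_sum_delta v) linear_sum.
by apply: eq_bigr => i _; rewrite linearZ /= /p_partial deriveE.
Qed.

Lemma p_dotZr (u w : V) (c : R) : p_dot u (c *: w) = c * p_dot u w.
Proof. by rewrite /p_dot mulr_sumr; apply: eq_bigr => i _; rewrite mxE mulrCA. Qed.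

Lemma p_qformZ (H : 'M[R]_d) (u : V) (c : R) :
  p_qform H (c *: u) = c ^+ 2 * p_qform H u.
Proof.
rewrite /p_qform -scalemxAl p_dotZr /p_dot !mulr_sumr.
by apply: eq_bigr => i _; rewrite mxE; ring.
Qed.

Lemma taylor2_segment (g : V -> R) (a v : V) (M : R) :
  (forall s : R, 0 <= s <= 1 -> differentiable g (a + s *: v) /\
     forall i, differentiable (p_partial i g) (a + s *: v)) ->
  (forall s : R, 0 <= s <= 1 -> `|p_qform (p_hessian g (a + s *: v)) v| <= M) ->
  `|g (a + v) - g a - p_dot (p_grad g a) v| <= M / 2.
Proof.
move=> g_diff hess_le.
pose g1 r := \sum_i v 0 i * p_partial i g (a + r *: v).
have := @taylor2_abs _ (fun r => g (a + r *: v)) g1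
  (fun r => p_qform (p_hessian g (a + r *: v)) v) M.
have -> : g1 0 = p_dot (p_grad g a) v.
  by rewrite /g1 scale0r addr0; apply: eq_bigr => i _; rewrite mxE mulrC.
rewrite scale1r scale0r addr0; apply => //.
  move=> s s01; have [dg _] := g_diff s s01.
  by apply: is_derive_eq; [exact: is_derive_along_line | exact: derive_partial_sum].
move=> s s01; have [_ dpartial] := g_diff s s01.
have -> : g1 = \sum_i (fun r => v 0 i * p_partial i g (a + r *: v)).
  by rewrite /g1 fct_sumE.
apply: is_derive_eq.
  by apply: is_derive_sum => i; exact/is_deriveZ/is_derive_along_line.
rewrite /p_qform /p_dot; apply: eq_bigr => i _.
rewrite derive_partial_sum // mxE; congr (_ * _).
by apply: eq_bigr => j _; rewrite !mxE.
Qed.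

Lemma transversal_time_bound (B : set V) (g : V -> R) (x y f : V)
    (c a2 M L : R) :
  (forall z, B z -> differentiable g z /\
     forall i, differentiable (p_partial i g) z) ->
  p_lipschitz_on B g L ->
  (forall s, 0 <= s <= 1 -> B (x + s *: (y - x))) ->
  (forall s, 0 <= s <= 1 -> `|p_qform (p_hessian g (x + s *: (y - x))) f| <= M) ->
  y - x = c *: f -> g x = 0 -> a2 <= p_dot (p_grad g x) f ->
  `|c| * a2 <= M / 2 * c ^+ 2 + L * p_enorm (y - x).
Proof.
move=> g_diff g_lip seg_B hess_le yx gx0 transv.
have Bx : B x by have := seg_B 0; rewrite scale0r addr0; apply; lra.
have By : B y by have := seg_B 1; rewrite scale1r addrC subrK; apply; lra.
have taylor : `|g y - c * p_dot (p_grad g x) f| <= c ^+ 2 * M / 2.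
  have := @taylor2_segment g x (y - x) (c ^+ 2 * M) (fun s s01 => g_diff _ (seg_B s s01)).
  rewrite [x + _]addrC subrK gx0 subr0 {3}yx p_dotZr; apply=> s s01.
  by rewrite {2}yx p_qformZ normrM ger0_norm ?sqr_ge0 // ler_wpM2l ?sqr_ge0 ?hess_le.
have lip : `|g y| <= L * p_enorm (y - x) by have := g_lip _ _ By Bx; rewrite gx0 subr0.
have lin : `|c| * a2 <= `|c * p_dot (p_grad g x) f|.
  by rewrite normrM ler_wpM2l // (le_trans transv) ?ler_norm.
have := ler_distD (g y) (c * p_dot (p_grad g x) f) 0.
rewrite !subr0 distrC; lra.
Qed.

End TaylorSegment.

Lemma C2_on_differentiable {R : realType} {d : nat} {U : set 'rV[R]_d}
    {g : 'rV[R]_d -> R} :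
  p_C2_on U g -> forall z, closure U z ->
  differentiable g z /\ forall i, differentiable (p_partial i g) z.
Proof. by move=> g_C2 z Uz; have [? [? _]] := g_C2 z Uz. Qed.

Theorem lemma3p5 (R : realType) (d : nat) (U : set 'rV[R]_d)
  (g : 'rV[R]_d -> R)
  (fm fp : R -> 'rV[R]_d -> R -> 'rV[R]_d -> 'rV[R]_d)
  (tau tk tk1 : R) (xk : 'rV[R]_d) (ts : R) (xs : 'rV[R]_d)
  (xt : R -> 'rV[R]_d) (aS Lg Mm Mp : R) :
  open U -> bounded_set U ->
  p_C2_on U g ->
  p_lipschitz_on (closure U) g Lg ->
  0 < tau -> tk1 = tk + tau ->
  U xk -> g xk < 0 ->
  (* transition point *)
  tk <= ts <= tk1 ->
  xs = xk + (ts - tk) *: fm tk xk ts xs ->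
  g xs = 0 ->
  (* discrete solution *)
  xt tk = xk -> xt ts = xs ->
  (forall t, tk <= t <= ts -> xs - xt t = (ts - t) *: fm t (xt t) ts xs) ->
  (forall t, ts <= t <= tk1 -> xt t = xs + (t - ts) *: fp ts xs t (xt t)) ->
  (* the segments on which the Hessian is evaluated lie in closure U *)
  (forall t s, tk <= t <= ts -> 0 <= s <= 1 ->
     closure U (xt t + s *: (xs - xt t))) ->
  (forall t s, ts <= t <= tk1 -> 0 <= s <= 1 ->
     closure U (xs + s *: (xt t - xs))) ->
  (* discrete transversality *)
  0 < aS ^+ 2 ->
  (forall t, tk <= t <= ts -> aS ^+ 2 <= p_dot (p_grad g xs) (fm t (xt t) ts xs)) ->
  (forall t, ts <= t <= tk1 -> aS ^+ 2 <= p_dot (p_grad g xs) (fp ts xs t (xt t))) ->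
  (* Mm, Mp bound the quantities whose suprema define hat M_-, hat M_+ *)
  (forall t s, tk <= t <= ts -> 0 <= s <= 1 ->
     `|p_qform (p_hessian g (xt t + s *: (xs - xt t))) (fm t (xt t) ts xs)| <= Mm) ->
  (forall t s, ts <= t <= tk1 -> 0 <= s <= 1 ->
     `|p_qform (p_hessian g (xs + s *: (xt t - xs))) (fp ts xs t (xt t))| <= Mp) ->
  forall t, tk <= t <= tk1 ->
    `|t - ts| <= ((2^-1 * Num.max Mm Mp) * (t - ts) ^+ 2
                  + Lg * p_enorm (xt t - xt ts)) / aS ^+ 2.
Proof.
move=> _ _ g_C2 g_lip _ _ _ _ /andP[tk_ts ts_tk1] _ gxs0 _ xts eq_m eq_p
  seg_m seg_p aS_pos transv_m transv_p hess_m hess_p t /andP[tk_t t_tk1].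
rewrite xts ler_pdivlMr //.
suff [f [M [xt_f M_le transv seg hess]]] : exists f M,
    [/\ xt t - xs = (t - ts) *: f, M <= Num.max Mm Mp,
        aS ^+ 2 <= p_dot (p_grad g xs) f,
        forall s, 0 <= s <= 1 -> closure U (xs + s *: (xt t - xs)) &
        forall s, 0 <= s <= 1 ->
          `|p_qform (p_hessian g (xs + s *: (xt t - xs))) f| <= M].
  have := transversal_time_bound (C2_on_differentiable g_C2) g_lip seg hess
    xt_f gxs0 transv.
  have : M / 2 * (t - ts) ^+ 2 <= 2^-1 * Num.max Mm Mp * (t - ts) ^+ 2.
    by rewrite ler_wpM2r ?sqr_ge0 // mulrC ler_wpM2l.
  lra.
have [t_le_ts | ts_lt_t] := leP t ts.
- have t_m : tk <= t <= ts by rewrite tk_t t_le_ts.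
  (* reparametrize the segment [xt t, xs] from its endpoint xs *)
  have flip s : xs + s *: (xt t - xs) = xt t + (1 - s) *: (xs - xt t).
    by apply/rowP => i; rewrite !mxE; ring.
  have flip01 (s : R) : 0 <= s <= 1 -> 0 <= 1 - s <= 1 by lra.
  exists (fm t (xt t) ts xs), Mm; split.
  + by rewrite -[xt t - xs]opprB eq_m // -scaleNr opprB.
  + by rewrite le_max lexx.
  + exact: transv_m.
  + by move=> s s01; rewrite flip; apply: seg_m; rewrite ?flip01.
  + by move=> s s01; rewrite flip; apply: hess_m; rewrite ?flip01.
- have t_p : ts <= t <= tk1 by rewrite t_tk1 ltW.
  exists (fp ts xs t (xt t)), Mp; split.
  + by rewrite {1}(eq_p t t_p) addrC addKr.
  + by rewrite le_max lexx orbT.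
  + exact: transv_p.
  + by move=> s s01; exact: (seg_p t s t_p s01).
  + by move=> s s01; exact: (hess_p t s t_p s01).
Qed.
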